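(* Let $L \in K[D]$ with $\operatorname{ord}(L)=d$ and $\operatorname{Sym}_L=S_1S_2$, where $S_1,S_2$ are homogeneous of degrees $d_1,d_2$, and let $S_0=\gcd(S_1,S_2)$ have degree $d_0$. Let $t$ be an integer with $1\le t\le d-d_0$, and let $F_1\circ F_2$ be a partial factorization of $L$ of order $t$ and type $(S_1)(S_2)$. Then there is at most one, up to lower order terms, extension of $F_1\circ F_2$ to a partial factorization of order $t-1$ of the same type. That is: if $F_1'\circ F_2'$ and $F_1''\circ F_2''$ are partial factorizations of $L$ of order $t-1$ and type $(S_1)(S_2)$, both extensions of $F_1\circ F_2$, then $\operatorname{ord}(F_i'-F_i'')<(t-1)-(d-d_i)$ for $i=1,2$.
   Context: $K$ is a field with commuting derivations $\partial_1,\dots,\partial_n$, and $K[D]=K[D_1,\dots,D_n]$ is the ring of linear differential operators over $K$: the $D_i$ commute with each other and $D_i\circ a=aD_i+\partial_i(a)$ for $a\in K$. Every $L\in K[D]$ is uniquely $\sum_{|J|\le d}a_JD^J$ with $a_J\in K$ and $D^J=D_1^{j_1}\cdots D_n^{j_n}$. The order $\operatorname{ord}(L)$ is the largest $|J|=j_1+\dots+j_n$ with $a_J\ne0$, and $\operatorname{ord}(0)=-\infty$. The symbol $\operatorname{Sym}_L=\sum_{|J|=\operatorname{ord}L}a_JX^J\in K[X_1,\dots,X_n]$. For $t\in\{0,\dots,\operatorname{ord}L\}$, a partial factorization of $L$ of order $t$ and type $(S_1)(S_2)$ is a composition $F_1\circ F_2$ with $\operatorname{Sym}_{F_i}=S_i$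 and $\operatorname{ord}(L-F_1\circ F_2)<t$. If $F_1\circ F_2$ and $F_1'\circ F_2'$ are partial factorizations of orders $t$ and $t'<t$, the latter is an extension of the former if $\operatorname{ord}(F_i-F_i')<t-(d-d_i)$ for $i=1,2$, where $d=\operatorname{ord}L$ and $d_i=\deg S_i$. *)

From HB Require Import structures.
From mathcomp Require Import all_boot all_order all_algebra.
From mathcomp Require Import mpoly.
Set Implicit Arguments. Unset Strict Implicit. Unset Printing Implicit Defensive.
Import Order.TTheory GRing.Theory Num.Theory.
Local Open Scope ring_scope.

(* The ring K[D] = K[D_1,...,D_n] of linear differential operators over a field K
   with derivations der 0, ..., der (n-1).  An operator L = \sum_J a_J D^J (normal
   form, coefficients on the left) is represented by the element
   \sum_J a_J 'X_[J] of {mpoly K[n]}: the additive structure, coefficients a_J = L@_J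
   and the multi-indices J are those of the normal form.  The (noncommutative)
   composition is defined below from the defining relations
     D_i D_j = D_j D_i,   D_i o a = a D_i + der i a. *)

Section DiffOps.
Variables (K : fieldType) (n : nat) (der : 'I_n -> K -> K).

Definition commuting_derivations : Prop :=
  [/\ forall i a b, der i (a + b) = der i a + der i b,
      forall i a b, der i (a * b) = der i a * b + a * der i b
    & forall i j a, der i (der j a) = der j (der i a)].

Definition coef_der (i : 'I_n) (P : {mpoly K[n]}) : {mpoly K[n]} :=
  \sum_(m <- msupp P) der i P@_m *: 'X_[m].

(* left composition by D_i:  D_i o (\sum_M b_M D^M) = \sum_M (b_M D^(M+e_i) + der i b_M D^M) *)
Definition lcompD (i : 'I_n) (P : {mpoly K[n]}) : {mpoly K[n]} :=
  P * 'X_i + coef_der i P.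

Definition lcompDJ (J : 'X_{1..n}) (P : {mpoly K[n]}) : {mpoly K[n]} :=
  foldr (fun i Q => iter (J i) (lcompD i) Q) P (enum 'I_n).

Definition dcomp (L P : {mpoly K[n]}) : {mpoly K[n]} :=
  \sum_(J <- msupp L) L@_J *: lcompDJ J P.

End DiffOps.

(* ord(L) < k, for k an integer, with the convention ord(0) = -oo *)
Definition ord_lt (K : fieldType) (n : nat) (L : {mpoly K[n]}) (k : int) : Prop :=
  forall J, J \in msupp L -> (mdeg J)%:Z < k.

Definition ord_eq (K : fieldType) (n : nat) (L : {mpoly K[n]}) (d : nat) : Prop :=
  L != 0 /\ msize L = d.+1.

Definition Sym (K : fieldType) (n : nat) (L : {mpoly K[n]}) : {mpoly K[n]} :=
  \sum_(J <- msupp L | mdeg J == (msize L).-1) L@_J *: 'X_[J].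

Definition mdvd (K : fieldType) (n : nat) (P Q : {mpoly K[n]}) : Prop :=
  exists R, Q = P * R.

Definition is_gcd (K : fieldType) (n : nat) (S1 S2 S0 : {mpoly K[n]}) : Prop :=
  [/\ mdvd S0 S1, mdvd S0 S2 &
      forall C, mdvd C S1 -> mdvd C S2 -> mdvd C S0].

Definition partial_fact (K : fieldType) (n : nat) (der : 'I_n -> K -> K)
    (L F1 F2 S1 S2 : {mpoly K[n]}) (t : nat) : Prop :=
  [/\ Sym F1 = S1, Sym F2 = S2 & ord_lt (L - dcomp der F1 F2) t%:Z].

Definition extends (K : fieldType) (n : nat)
    (F1 F2 F1' F2' : {mpoly K[n]}) (t d d1 d2 : nat) : Prop :=
  ord_lt (F1 - F1') (t%:Z - (d%:Z - d1%:Z)) /\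
  ord_lt (F2 - F2') (t%:Z - (d%:Z - d2%:Z)).

From HB Require Import structures.
From mathcomp Require Import all_boot all_order all_algebra.
From mathcomp Require Import mpoly ssrcomplements.
From mathcomp Require Import ring zify.
From Stdlib Require Import Classical Wf_nat.
Import Order.TTheory GRing.Theory Num.Theory.
Local Open Scope ring_scope.
Set Implicit Arguments. Unset Strict Implicit. Unset Printing Implicit Defensive.

(* Let G_i = F_i' - F_i''.  Both extensions agree with F_1 o F_2 up to order
   t - (d - d_i), so ord G_i <= t - 1 - (d - d_i), and A o B agrees with the
   commutative product A B up to lower order.  The two compositions differ by
   F_1' o G_2 + G_1 o F_2'', of order < t - 1, whose homogeneous part of degree
   t - 1 is S_1 g_2 + g_1 S_2, g_i being the part of G_i of degree
   t - 1 - (d - d_i).  Hence S_1 g_2 = - g_1 S_2.  Polynomial rings over a field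
   are factorial (Gauss's lemma, by induction on the number of variables), so
   S_1 / gcd(S_1, S_2) divides g_1; as deg g_1 <= t - 1 - d_2 < d_1 - d_0, this
   forces g_1 = 0 and then g_2 = 0, i.e. ord G_i < (t - 1) - (d - d_i). *)

Lemma ex_minP (P : nat -> Prop) :
  (exists n, P n) -> exists n, P n /\ forall m, P m -> (n <= m)%N.
Proof.
move=> exP; have [n [[Pn n_min] _]] :=
  dec_inh_nat_subset_has_unique_least_element P (fun k => classic (P k)) exP.
by exists n; split=> // m /n_min/ssrnat.leP.
Qed.

Section Divisibility.
Variable R : idomainType.
Implicit Types a b c p u x y : R.

Definition divides a b := exists c, b = a * c.

Definition prime_elem p := [/\ p != 0, p \isn't a GRing.unit &
  forall x y, divides p (x * y) -> divides p x \/ divides p y].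

Definition irreducible_elem a :=
  forall x y, a = x * y -> x \is a GRing.unit \/ y \is a GRing.unit.

Definition prime_factorable a := exists u (s : seq R),
  [/\ u \is a GRing.unit, {in s, forall x, prime_elem x}
    & a = u * \prod_(x <- s) x].

Definition ufd := forall a, a != 0 -> prime_factorable a.

Lemma divides_refl a : divides a a.
Proof. by exists 1; rewrite mulr1. Qed.

Lemma divides0 a : divides a 0.
Proof. by exists 0; rewrite mulr0. Qed.

Lemma divides_mulr a b c : divides a b -> divides a (b * c).
Proof. by move=> [x ->]; exists (x * c); rewrite mulrA. Qed.

Lemma divides_mull a b c : divides a b -> divides a (c * b).
Proof. by rewrite mulrC; apply: divides_mulr. Qed.

Lemma divides_mul2l a b c : divides a b -> divides (c * a) (c * b).
Proof. by move=> [x ->]; exists x; rewrite mulrA. Qed.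

Lemma dividesD a b c : divides a b -> divides a c -> divides a (b + c).
Proof. by move=> [x ->] [y ->]; exists (x + y); rewrite mulrDr. Qed.

Lemma dividesB a b c : divides a b -> divides a c -> divides a (b - c).
Proof. by move=> ? [y ->]; apply: dividesD => //; exists (- y); rewrite mulrN. Qed.

Lemma divides_sum a (I : Type) (r : seq I) (P : pred I) (F : I -> R) :
  (forall i, P i -> divides a (F i)) -> divides a (\sum_(i <- r | P i) F i).
Proof. by move=> aF; elim/big_ind: _ => //; [apply: divides0 | apply: dividesD]. Qed.

Lemma divides_unit a u : u \is a GRing.unit -> divides a u -> a \is a GRing.unit.
Proof. by move=> + [x ux]; rewrite ux unitrM => /andP[]. Qed.

Lemma prime_elem_cons y (s : seq R) : {in y :: s, forall x, prime_elem x} ->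
  prime_elem y /\ {in s, forall x, prime_elem x}.
Proof. by move=> ps; split=> [|x xs]; apply: ps; rewrite inE ?eqxx ?xs ?orbT. Qed.

Lemma prime_divides_prod p u (s : seq R) : prime_elem p -> u \is a GRing.unit ->
  divides p (u * \prod_(x <- s) x) -> exists2 x, x \in s & divides p x.
Proof.
move=> [_ pNU pP] uU; elim: s => [|y s IHs].
  by rewrite big_nil mulr1 => /(divides_unit uU); rewrite (negbTE pNU).
rewrite big_cons mulrCA => /pP[py | /IHs[x xs px]].
  by exists y; rewrite ?mem_head.
by exists x; rewrite // inE xs orbT.
Qed.

Lemma prime_elem_irreducible p : prime_elem p -> irreducible_elem p.
Proof.
move=> [p0 _ pP] x y pE; have : divides p (x * y) by rewrite -pE; apply: divides_refl.
case/pP=> [[z xE] | [z yE]]; [right | left]; apply/unitrP; exists z.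
  have zy1 : z * y = 1 by apply: (mulfI p0); rewrite mulr1 mulrA -xE -pE.
  by split=> //; rewrite mulrC.
have xz1 : x * z = 1 by apply: (mulfI p0); rewrite mulr1 mulrCA -yE -pE.
by split=> //; rewrite mulrC.
Qed.

Lemma prime_factorableM a b :
  prime_factorable a -> prime_factorable b -> prime_factorable (a * b).
Proof.
move=> [u [s [uU ps ->]]] [v [r [vU pr ->]]]; exists (u * v), (s ++ r); split.
- by rewrite unitrM uU vU.
- by move=> x; rewrite mem_cat => /orP[/ps | /pr].
- by rewrite big_cat /=; ring.
Qed.

End Divisibility.

Section PolyUfd.
Variable R : idomainType.
Implicit Types (c p : R) (f g h q r : {poly R}).

Definition primitive f := forall p, prime_elem p -> ~ divides p%:P f.

Lemma divides_polyC p g : divides p%:P g <-> forall i, divides p g`_i.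
Proof.
split=> [[q ->] i | pg]; first by exists q`_i; rewrite coefCM.
have pgE i : exists y, g`_i == p * y by have [y ->] := pg i; exists y.
exists (\poly_(i < size g) xchoose (pgE i)); apply/polyP => i.
rewrite coefCM coef_poly; case: ltnP => [_ | gi]; first exact/eqP/(xchooseP (pgE i)).
by rewrite mulr0 nth_default.
Qed.

(* Gauss: if p divides the coefficients of g h but not all those of g, take the
   least i0 with p not dividing g_i0; the coefficient i0 + j of g h then shows,
   by induction on j, that p divides h_j. *)
Lemma polyC_prime_dvdM p g h : prime_elem p ->
  divides p%:P (g * h) -> divides p%:P g \/ divides p%:P h.
Proof.
move=> [_ _ pP] /divides_polyC pgh.
have [pg | pNg] := classic (divides p%:P g); [by left | right].
have [i0 [pNg_i0 i0_min]] :
    exists i0, ~ divides p g`_i0 /\ forall i, ~ divides p g`_i -> (i0 <= i)%N.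
  apply: ex_minP; apply: NNPP => allp; apply/pNg/divides_polyC => i.
  by apply: NNPP => pNg_i; apply: allp; exists i.
apply/divides_polyC; elim/ltn_ind => j IHj.
have i0_lt : (i0 < (i0 + j).+1)%N by rewrite ltnS leq_addr.
have := pgh (i0 + j)%N; rewrite coefM (bigD1 (Ordinal i0_lt)) //= addKn.
suff p_rest : divides p
    (\sum_(k < (i0 + j).+1 | k != Ordinal i0_lt) g`_k * h`_(i0 + j - k)).
  by move=> /dividesB /(_ p_rest); rewrite addrK => /pP[].
apply: divides_sum => k k_neq; have [k_lt | k_ge] := ltnP k i0.
  by apply: divides_mulr; apply: NNPP => /i0_min; rewrite leqNgt k_lt.
have k_gt : (i0 < k)%N.
  by rewrite ltn_neqAle k_ge andbT; apply: contraNneq k_neq => e; apply/eqP/val_inj.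
apply/divides_mull/IHj; have := ltn_ord k; rewrite ltnS => k_le.
by rewrite ltn_subLR // ltn_add2r.
Qed.

Lemma polyC_prime p : prime_elem p -> prime_elem p%:P.
Proof.
move=> pp; have [p0 pNU _] := pp; split.
- by rewrite polyC_eq0.
- by rewrite poly_unitE size_polyC p0 coefC.
- by move=> g h /(polyC_prime_dvdM pp).
Qed.

(* Take r of least size in the ideal (f, g): the pseudo-remainder by r of an
   element of the ideal lies in the ideal and is smaller than r, hence is 0. *)
Lemma ideal2_pseudo_generator f g : f != 0 ->
  exists r, [/\ r != 0, exists u v, r = u * f + v * g &
    forall u v, exists2 c, c != 0 & divides r (c%:P * (u * f + v * g))].
Proof.
move=> f0.
pose comb_size m := exists u v, u * f + v * g != 0 /\ size (u * f + v * g) = m.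
have [m [[u [v [r0 rE]]] m_min]] : exists m, comb_size m /\
    forall m', comb_size m' -> (m <= m')%N.
  by apply: ex_minP; exists (size f), 1, 0; rewrite mul0r addr0 mul1r.
set r := u * f + v * g in r0 rE; exists r; split=> // [|u1 v1]; first by exists u, v.
set q := u1 * f + v1 * g; set c := lead_coef r ^+ scalp q r.
exists c; first by rewrite expf_neq0 // lead_coef_eq0.
exists (q %/ r); have qE := Pdiv.Idomain.divp_eq q r.
suff mod0 : q %% r = 0 by rewrite mul_polyC qE mod0 addr0 mulrC.
have [// | mod0] := eqVneq (q %% r) 0.
have := ltn_modp q r; rewrite r0 rE ltnNge => /negP[]; apply: m_min.
exists (c *: u1 - (q %/ r) * u), (c *: v1 - (q %/ r) * v).
suff -> : (c *: u1 - q %/ r * u) * f + (c *: v1 - q %/ r * v) * g = q %% r by [].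
apply: (addrI ((q %/ r) * r)); rewrite -qE /q /r -!mul_polyC; ring.
Qed.

Hypothesis ufdR : ufd R.

Lemma primitive_dvd_polyCM f c h : primitive f -> c != 0 ->
  divides f (c%:P * h) -> divides f h.
Proof.
move=> pf /ufdR[u [s [uU ps ->]]] [z]; elim: s ps h z => [|y s IHs] ps h z.
  rewrite big_nil mulr1 => E; exists (u^-1%:P * z).
  by rewrite mulrCA -E mulrA -polyCM mulVr // mul1r.
have [py ps'] := prime_elem_cons ps; have [y0 _ _] := py.
rewrite big_cons mulrCA polyCM -mulrA => E.
have : divides y%:P (f * z) by rewrite -E; apply/divides_mulr/divides_refl.
case/(polyC_prime_dvdM py) => [yf | [z' zE]]; first by case: (pf y py yf).
apply: (IHs ps' h z'); apply: (mulfI (_ : y%:P != 0)); first by rewrite polyC_eq0.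
by rewrite E zE mulrCA.
Qed.

Lemma polyC_mul_split c f q r : c != 0 -> c%:P * f = q * r ->
  exists q' r' e, f = q' * r' /\ r = e%:P * r'.
Proof.
move=> /ufdR[u [s [uU ps ->]]]; elim: s ps q r => [|y s IHs] ps q r.
  rewrite big_nil mulr1 => E; exists (u^-1%:P * q), r, 1; split; last by rewrite mul1r.
  by rewrite -mulrA -E mulrA -polyCM mulVr // mul1r.
have [py ps'] := prime_elem_cons ps; have [y0 _ _] := py.
have y0' : y%:P != 0 by rewrite polyC_eq0.
rewrite big_cons mulrCA polyCM -mulrA => E.
have : divides y%:P (q * r) by rewrite -E; apply/divides_mulr/divides_refl.
case/(polyC_prime_dvdM py) => [[q' qE] | [r' rE]].
  by apply: (IHs ps' q' r); apply: (mulfI y0'); rewrite E qE mulrA.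
have [q'' [r'' [e [fE r'E]]]] : exists q' r'' e, f = q' * r'' /\ r' = e%:P * r''.
  by apply: (IHs ps' q r'); apply: (mulfI y0'); rewrite E rE mulrCA.
by exists q'', r'', (y * e); rewrite rE r'E polyCM mulrA.
Qed.

Lemma primitive_irreducible_prime f : (1 < size f)%N -> primitive f ->
  irreducible_elem f -> prime_elem f.
Proof.
move=> sf pf irrf; have f0 : f != 0 by rewrite -size_poly_gt0 ltnW.
split=> //; first by rewrite poly_unitE negb_and gtn_eqF.
move=> g h [k fk].
have [r [r0 [u [v rE]] r_gen]] := ideal2_pseudo_generator g f0.
have [r_small | r_large] := leqP (size r) 1.
  (* r is a nonzero constant with r h = f (u h + v k) *)
  right; have rC := size1_polyC r_small.
  have c0 : r`_0 != 0 by rewrite -polyC_eq0 -rC.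
  apply: (primitive_dvd_polyCM pf c0); exists (u * h + v * k).
  by rewrite -rC rE mulrDl -[v * g * h]mulrA fk; ring.
left; have [cf cf0 [q fE]] := r_gen 1 0; rewrite mul0r addr0 mul1r [r * q]mulrC in fE.
have [q' [r' [e [fqr rr]]]] := polyC_mul_split cf0 fE.
have e0 : e != 0 by apply: contra_neq r0 => e0; rewrite rr e0 mul0r.
have sr' : size r' = size r by rewrite rr size_Cmul.
have [q'U | r'U] := irrf _ _ fqr; last first.
  by move: r'U; rewrite poly_unitE sr' gtn_eqF.
have f_r : divides f r.
  by exists (e%:P * q'^-1); rewrite rr fqr -[e%:P * r']mulr1 -(mulVr q'U); ring.
have [cg cg0 [z gE]] := r_gen 0 1; rewrite mul0r add0r mul1r in gE.
apply: (primitive_dvd_polyCM pf cg0); rewrite gE.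
exact: divides_mulr.
Qed.

Lemma const_nonunit_prime_factor (a : {poly R}) : (size a <= 1)%N -> a != 0 ->
  a \isn't a GRing.unit -> exists2 y, prime_elem y & divides y%:P a.
Proof.
move=> sa; rewrite (size1_polyC sa) polyC_eq0 => /ufdR[u [[|y s] [uU ps aE]]] aNU.
  by move: aNU; rewrite aE big_nil mulr1 (rmorph_unit _ uU).
have [py _] := prime_elem_cons ps; exists y => //.
by exists (u * \prod_(x <- s) x)%:P; rewrite aE big_cons mulrCA polyCM.
Qed.

Lemma primitive_prime_factorable k f :
  (forall g, (size g < k)%N -> g != 0 -> prime_factorable g) ->
  (size f <= k)%N -> f != 0 -> primitive f -> prime_factorable f.
Proof.
move=> IHk sf f0 pf.
have [sf1 | sf2] := leqP (size f) 1.
  have [fU | fNU] := boolP (f \is a GRing.unit).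
    by exists f, [::]; rewrite big_nil mulr1.
  by have [y py /(pf y py)] := const_nonunit_prime_factor sf1 f0 fNU.
have [irrf | ] := classic (irreducible_elem f).
  exists 1, [:: f]; split; rewrite ?unitr1 ?big_seq1 ?mul1r //.
  by move=> x; rewrite inE => /eqP ->; apply: primitive_irreducible_prime.
move=> /not_all_ex_not[a] /not_all_ex_not[b].
move=> /(imply_to_and (f = a * b))[fE] /not_or_and[aNU bNU].
(* both factors are nonconstant, as f is primitive *)
have large (x y : {poly R}) : f = x * y -> ~ x \is a GRing.unit -> (1 < size x)%N.
  move=> fxy xNU; rewrite ltnNge; apply/negP => sx.
  have x0 : x != 0 by apply: contra_neq f0 => x0; rewrite fxy x0 mul0r.
  have [z pz [w xw]] := const_nonunit_prime_factor sx x0 (introT negP xNU).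
  by apply: (pf z pz); exists (w * y); rewrite fxy xw mulrA.
have sa := large a b fE aNU.
have sb := large b a (etrans fE (mulrC a b)) bNU.
have [a0 b0] : a != 0 /\ b != 0.
  by split; apply: contra_neq f0 => e0; rewrite fE e0 ?mul0r ?mulr0.
have sfE : size f = (size a + size b).-1 by rewrite fE size_mul.
rewrite fE; apply: prime_factorableM; apply: IHk => //;
  by apply: leq_trans sf; rewrite sfE; lia.
Qed.

(* Induction on the number of prime factors of the leading coefficient, dividing
   out a prime constant while f is not primitive. *)
Lemma prime_factorable_of_primitive k :
  (forall f, (size f <= k)%N -> f != 0 -> primitive f -> prime_factorable f) ->
  forall f, (size f <= k)%N -> f != 0 -> prime_factorable f.
Proof.
move=> prim_fact f sf f0; have /ufdR[u [s [uU ps lcE]]] : lead_coef f != 0.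
  by rewrite lead_coef_eq0.
move: {2}(size s) (erefl (size s)) => N sN.
elim/ltn_ind: N => N IHN in f u s sf f0 uU ps lcE sN *.
have [pf | /not_all_ex_not[y]] := classic (primitive f); first exact: prim_fact.
move=> /(imply_to_and (prime_elem y))[py /NNPP[f1 fE]]; have [y0 yNU _] := py.
have lcf : lead_coef f = y * lead_coef f1 by rewrite fE lead_coefM lead_coefC.
have /(prime_divides_prod py uU)[x xs [w xE]] : divides y (u * \prod_(x <- s) x).
  by rewrite -lcE lcf; apply/divides_mulr/divides_refl.
have wU : w \is a GRing.unit.
  by case: (prime_elem_irreducible (ps x xs) xE) => // yU; rewrite yU in yNU.
have [u1 [s1 [u1U ps1 f1E]]] : prime_factorable f1.
  have lt_N : (size (rem x s) < N)%N.
    by rewrite size_rem // -sN ltn_predL; case: (s) xs.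
  apply: (IHN _ lt_N f1 (u * w) (rem x s)) => //.
  - by rewrite -(size_Cmul f1 y0) -fE.
  - by apply: contra_neq f0 => f10; rewrite fE f10 mulr0.
  - by rewrite unitrM uU wU.
  - by move=> z /mem_rem; apply: ps.
  - by apply: (mulfI y0); rewrite -lcf lcE (big_rem x xs) /= xE; ring.
exists u1, (y%:P :: s1); split=> //.
  by move=> z; rewrite inE => /orP[/eqP-> | /ps1 //]; apply: polyC_prime.
by rewrite fE f1E big_cons; ring.
Qed.

Lemma poly_ufd : ufd {poly R}.
Proof.
suff fact_k k f : (size f <= k)%N -> f != 0 -> prime_factorable f.
  by move=> f; apply: fact_k (leqnn _).
elim: k f => [|k IHk] f sf f0.
  by move: f0; rewrite -size_poly_gt0; case: (size f) sf.
apply: prime_factorable_of_primitive sf f0 => g sg g0.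
by apply: primitive_prime_factorable sg g0 => h; rewrite ltnS; apply: IHk.
Qed.

End PolyUfd.

Lemma ufd_iso (R S : idomainType) (phi : {rmorphism R -> S})
    (psi : {rmorphism S -> R}) :
  cancel phi psi -> cancel psi phi -> ufd R -> ufd S.
Proof.
move=> phiK psiK ufdR a a0.
have /ufdR[u [s [uU ps aE]]] : psi a != 0.
  by apply: contra_neq a0 => e; rewrite -[a]psiK e rmorph0.
exists (phi u), (map phi s); split; first exact: rmorph_unit.
  move=> _ /mapP[y ys ->]; have [y0 yNU yP] := ps y ys; split.
  - by apply: contra_neq y0 => e; rewrite -[y]phiK e rmorph0.
  - by apply: contra yNU => /(rmorph_unit psi); rewrite phiK.
  - move=> x1 x2 [z zE].
    have : divides y (psi x1 * psi x2).
      by exists (psi z); rewrite -rmorphM zE rmorphM phiK.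
    by case/yP=> [[w wE] | [w wE]]; [left | right];
      exists (phi w); rewrite -[LHS]psiK wE rmorphM.
by rewrite -[a]psiK aE rmorphM rmorph_prod big_map.
Qed.

Section MPolyUfd.
Variable K : fieldType.

Lemma mpoly_rmorph_eq k (S : nzRingType) (g1 g2 : {rmorphism {mpoly K[k]} -> S}) :
  (forall c, g1 c%:MP = g2 c%:MP) -> (forall i, g1 'X_i = g2 'X_i) -> g1 =1 g2.
Proof.
move=> gC gX p; rewrite [p]mpolyE !rmorph_sum; apply: eq_bigr => m _.
rewrite -mul_mpolyC !rmorphM gC mpolyXE_id !rmorph_prod; congr (_ * _).
by apply: eq_bigr => i _; rewrite !rmorphXn gX.
Qed.

Lemma mpoly0_ufd : ufd {mpoly K[0]}.
Proof.
move=> p p0; exists p, [::]; split; rewrite ?big_nil ?mulr1 //.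
rewrite [p]nvar0_mpolyC mpolyC_eq0 in p0 *.
by apply/unitrP; exists ((p@_0)^-1)%:MP; rewrite -!mpolyCM mulVf ?mulfV.
Qed.

Variable n : nat.

(* {mpoly K[n.+1]} is isomorphic to {poly {mpoly K[n]}}, the last variable
   becoming the polynomial indeterminate. *)
Definition split_last_var (i : 'I_n.+1) : {poly {mpoly K[n]}} :=
  if unlift ord_max i is Some j then ('X_j)%:P else 'X.

Local Notation to_poly := (mmap (polyC \o @mpolyC n K) split_last_var).

Lemma commr_mwiden_X : commr_rmorph (@mwiden n K) 'X_ord_max.
Proof. by move=> a; rewrite /GRing.comm mulrC. Qed.

Local Notation of_poly := (horner_morph commr_mwiden_X).

Lemma widen_ord_max_lift (j : 'I_n) : widen_ord (leqnSn n) j = lift ord_max j.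
Proof. by apply: val_inj; rewrite /= /bump leqNgt ltn_ord. Qed.

Lemma to_polyC c : to_poly c%:MP = (c%:MP)%:P.
Proof. by rewrite mmapC. Qed.

Lemma to_polyX i : to_poly 'X_i = split_last_var i.
Proof. by rewrite mmapX mmap1U. Qed.

Lemma of_polyC c : of_poly c%:P = mwiden c.
Proof. by rewrite /horner_morph map_polyC hornerC. Qed.

Lemma of_polyX : of_poly 'X = 'X_ord_max.
Proof. by rewrite /horner_morph map_polyX hornerX. Qed.

Lemma to_polyK : cancel to_poly of_poly.
Proof.
move=> p; apply: (@mpoly_rmorph_eq n.+1 _ (of_poly \o to_poly) idfun) => [c | i].
  by change (of_poly (to_poly c%:MP) = c%:MP); rewrite to_polyC of_polyC mwidenC.
change (of_poly (to_poly 'X_i) = 'X_i); rewrite to_polyX /split_last_var.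
case: unliftP => [j -> | ->]; last exact: of_polyX.
by rewrite of_polyC -widen_ord_max_lift mwidenX mnmwiden1.
Qed.

Lemma of_polyK : cancel of_poly to_poly.
Proof.
have to_poly_widen c : to_poly (mwiden c) = c%:P.
  apply: (@mpoly_rmorph_eq n _ (to_poly \o @mwiden n K) polyC) => [c' | i].
    by change (to_poly (mwiden c'%:MP) = (c'%:MP)%:P); rewrite mwidenC to_polyC.
  change (to_poly (mwiden 'X_i) = ('X_i)%:P).
  by rewrite mwidenX mnmwiden1 to_polyX /split_last_var widen_ord_max_lift liftK.
move=> p; rewrite -[p]coefK poly_def !raddf_sum; apply: eq_bigr => i _ /=.
rewrite -mul_polyC !rmorphM rmorphXn /= of_polyC of_polyX to_poly_widen rmorphXn.
congr (_ * _ ^+ _); apply: etrans (to_polyX _) _.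
by rewrite /split_last_var unlift_none.
Qed.

Lemma mpolyS_ufd : ufd {mpoly K[n]} -> ufd {mpoly K[n.+1]}.
Proof.
by move=> ufdn; apply: (ufd_iso of_polyK to_polyK); apply: poly_ufd.
Qed.

End MPolyUfd.

Lemma mpoly_ufd (K : fieldType) n : ufd {mpoly K[n]}.
Proof. by elim: n => [|n IHn]; [apply: mpoly0_ufd | apply: mpolyS_ufd]. Qed.

Section Syzygy.
Variables (K : fieldType) (n : nat).
Implicit Types A B C a b p q : {mpoly K[n]}.

Lemma msizeM_pred p q : p != 0 -> q != 0 ->
  (msize (p * q)).-1 = ((msize p).-1 + (msize q).-1)%N.
Proof.
move=> p0 q0; rewrite msizeM //.
move: p0 q0; rewrite -!msize_poly_eq0 -!lt0n.
by move: (msize p) (msize q) => [|x] [|y] //; rewrite addSn addnS.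
Qed.

Lemma msize_unit_pred p : p \is a GRing.unit -> (msize p).-1 = 0%N.
Proof.
move=> pU; have p0 : p != 0 by apply: contraTneq pU => ->; rewrite unitr0.
have := msizeM_pred p0 (_ : p^-1 != 0); rewrite invr_eq0 mulrV // msize1 => /(_ p0).
by move/esym/eqP; rewrite addn_eq0 => /andP[/eqP].
Qed.

Lemma divides_msize C A : A != 0 -> divides C A -> ((msize C).-1 <= (msize A).-1)%N.
Proof.
move=> A0 [z AE]; have [C0 z0] : C != 0 /\ z != 0.
  by split; apply: contra_neq A0 => e; rewrite AE e ?mul0r ?mulr0.
by rewrite AE msizeM_pred // leq_addr.
Qed.

(* Peel off the prime factors y of A one at a time: y divides a or B. *)
Lemma syzygy_common_divisor A B a b : A != 0 -> B != 0 -> a != 0 ->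
  A * b = a * B -> exists C,
  [/\ divides C A, divides C B & ((msize A).-1 <= (msize C).-1 + (msize a).-1)%N].
Proof.
move=> /mpoly_ufd[u [s [uU ps ->]]].
elim: s => [|y s IHs] in ps B a b *.
  move=> _ _ _; exists 1; rewrite big_nil mulr1 (msize_unit_pred uU).
  by split=> //; [exists u | exists B]; rewrite mul1r.
have [py ps'] := prime_elem_cons ps; have [y0 _ yP] := py.
set P := u * \prod_(x <- s) x.
have P0 : P != 0.
  apply: mulf_neq0; first by apply: contraTneq uU => ->; rewrite unitr0.
  by rewrite prodf_seq_neq0; apply/allP => x /ps'[].
rewrite big_cons mulrCA -/P => B0 a0 E.
have : divides y (a * B) by rewrite -E -mulrA; apply/divides_mulr/divides_refl.
case/yP=> [[a' aE] | [B' BE]].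
  have a'0 : a' != 0 by apply: contra_neq a0 => e; rewrite aE e mulr0.
  have [|C [CP CB Cdeg]] := IHs ps' B a' b B0 a'0.
    by apply: (mulfI y0); rewrite mulrA E aE mulrA.
  exists C; split=> //; first exact: divides_mull.
  by rewrite aE (msizeM_pred y0 P0) (msizeM_pred y0 a'0) addnCA leq_add2l.
have B'0 : B' != 0 by apply: contra_neq B0 => e; rewrite BE e mulr0.
have [|C [CP CB Cdeg]] := IHs ps' B' a b B'0 a0.
  by apply: (mulfI y0); rewrite mulrA E BE mulrCA.
have C0 : C != 0.
  by apply: contraNneq P0 => C0; case: CP => z; rewrite /P => ->; rewrite C0 mul0r.
exists (y * C); split; [exact: divides_mul2l | rewrite BE; exact: divides_mul2l |].
by rewrite (msizeM_pred y0 P0) (msizeM_pred y0 C0) -addnA leq_add2l.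
Qed.

Lemma gcd_syzygy_msize (S1 S2 S0 : {mpoly K[n]}) a b :
  S1 != 0 -> S2 != 0 -> divides S0 S1 ->
  (forall C, divides C S1 -> divides C S2 -> divides C S0) ->
  a != 0 -> S1 * b = a * S2 ->
  ((msize S1).-1 <= (msize a).-1 + (msize S0).-1)%N.
Proof.
move=> S10 S20 [z S1E] gcdS a0 E.
have S00 : S0 != 0 by apply: contra_neq S10 => e; rewrite S1E e mul0r.
have [C [CS1 CS2 Cdeg]] := syzygy_common_divisor S10 S20 a0 E.
apply: leq_trans Cdeg _; rewrite addnC leq_add2l.
exact: divides_msize S00 (gcdS C CS1 CS2).
Qed.

(* The bound on msize g1 uses truncated subtraction: for s < d2 it forces g1 = 0. *)
Lemma gcd_syzygy_eq0 (S1 S2 S0 g1 g2 : {mpoly K[n]}) d2 s :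
  S1 != 0 -> S2 != 0 -> divides S0 S1 ->
  (forall C, divides C S1 -> divides C S2 -> divides C S0) ->
  (s + (msize S0).-1 < (msize S1).-1 + d2)%N -> (msize g1 <= s.+1 - d2)%N ->
  S1 * g2 + g1 * S2 = 0 -> g1 = 0 /\ g2 = 0.
Proof.
move=> S10 S20 S0S1 gcdS lt_s g1_le E.
have g10 : g1 = 0.
  apply/eqP; apply: contraTT lt_s => g1N0; rewrite -leqNgt.
  have E' : S1 * g2 = (- g1) * S2 by rewrite mulNr; apply/eqP; rewrite -addr_eq0 E.
  have := gcd_syzygy_msize S10 S20 S0S1 gcdS (_ : - g1 != 0) E'.
  rewrite oppr_eq0 msizeN => /(_ g1N0).
  move: g1_le g1N0; rewrite -msize_poly_eq0 -lt0n.
  by move: (msize g1) (msize S0) (msize S1) => x y z; lia.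
split=> //; move: E; rewrite g10 mul0r addr0 => /eqP; rewrite mulf_eq0.
by rewrite (negbTE S10) => /eqP.
Qed.

End Syzygy.

Section MsizeBounds.
Variables (K : fieldType) (n : nat).
Implicit Types p q : {mpoly K[n]}.

Lemma msize_le_coef p k :
  (forall m, (k <= mdeg m)%N -> p@_m = 0) -> (msize p <= k)%N.
Proof.
move=> pk; rewrite leqNgt; apply/negP => k_lt.
have p0 : p != 0 by apply: contraTneq k_lt => ->; rewrite msize0.
have := mlead_supp p0; rewrite mcoeff_msupp pk ?eqxx //.
by rewrite -ltnS mlead_deg.
Qed.

Lemma ord_ltE p (e : nat) : ord_lt p e%:Z <-> (msize p <= e)%N.
Proof.
split=> [p_lt | p_le J /msize_mdeg_lt J_lt]; last by rewrite ltz_nat (leq_trans J_lt).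
apply: msize_le_coef => m le_m; apply/eqP; rewrite -[_ == _]negbK -mcoeff_msupp.
by apply/negP => /p_lt; rewrite ltz_nat ltnNge le_m.
Qed.

Lemma ord_lt_subnE p (m k : nat) : ord_lt p (m%:Z - k%:Z) <-> (msize p <= m - k)%N.
Proof.
have [k_le | m_lt] := leqP k m; first by rewrite subzn // ord_ltE.
have -> : (m - k = 0)%N by apply/eqP; rewrite subn_eq0 ltnW.
rewrite leqn0 msize_poly_eq0; split=> [p_lt | /eqP-> J].
  apply/eqP/mpolyP => J; rewrite mcoeff0; apply/eqP; rewrite -[_ == _]negbK.
  by rewrite -mcoeff_msupp; apply/negP => /p_lt; lia.
by rewrite msupp0.
Qed.

Lemma msizeD_bound p q c :
  (msize p <= c)%N -> (msize q <= c)%N -> (msize (p + q) <= c)%N.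
Proof. by move=> pc qc; apply: leq_trans (msizeD_le _ _) _; rewrite geq_max pc qc. Qed.

Lemma msizeB_bound p q c :
  (msize p <= c)%N -> (msize q <= c)%N -> (msize (p - q) <= c)%N.
Proof. by move=> pc qc; apply: msizeD_bound; rewrite ?msizeN. Qed.

Lemma msize_sub_triangle p q r c :
  (msize (p - q) <= c)%N -> (msize (p - r) <= c)%N -> (msize (q - r) <= c)%N.
Proof.
move=> pq pr; have -> : q - r = (p - r) - (p - q) by ring.
exact: msizeB_bound.
Qed.

Lemma msizeM_bound p q a b :
  (msize p <= a)%N -> (msize q <= b)%N -> (msize (p * q) <= (a + b).-1)%N.
Proof.
have [-> | p0] := eqVneq p 0; first by rewrite mul0r msize0.
have [-> | q0] := eqVneq q 0; first by rewrite mulr0 msize0.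
by move=> pa qb; rewrite msizeM // -!subn1 leq_sub2r // leq_add.
Qed.

Lemma msize_sum_bound (I : eqType) (r : seq I) (F : I -> {mpoly K[n]}) c :
  (forall i, i \in r -> (msize (F i) <= c)%N) -> (msize (\sum_(i <- r) F i) <= c)%N.
Proof.
move=> Fc; rewrite big_seq; apply: (big_ind (fun x => msize x <= c)%N) => //.
  by rewrite msize0.
by move=> x y; apply: msizeD_bound.
Qed.

Lemma coef_pihomog d p m :
  (pihomog mdeg d p)@_m = if mdeg m == d then p@_m else 0.
Proof.
pose k := maxn (msize p) (mdeg m).+1.
rewrite (@pihomogwE _ _ mdeg d k p) ?leq_maxl // big_mkcond /=.
rewrite (eq_bigr (fun i : 'X_{1..n < k} =>
  (if mdeg i == d then p@_i else 0) *: 'X_[i])); last first.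
  by move=> i _; case: ifP; rewrite ?scale0r.
by rewrite (mcoeff_mpoly (fun i => if mdeg i == d then p@_i else 0)) // leq_maxr.
Qed.

Lemma msize_pihomog d p : (msize (pihomog mdeg d p) <= d.+1)%N.
Proof.
apply: msize_le_coef => m le_m; rewrite coef_pihomog.
by case: eqP => // mE; move: le_m; rewrite mE ltnn.
Qed.

Lemma msize_pihomog_le d p : (msize (pihomog mdeg d p) <= msize p)%N.
Proof.
apply: msize_le_coef => m le_m; rewrite coef_pihomog.
by case: eqP => // _; apply/memN_msupp_eq0/msize_mdeg_ge.
Qed.

Lemma pihomog_small d p : (msize p <= d)%N -> pihomog mdeg d p = 0.
Proof.
move=> pd; apply/mpolyP => m; rewrite coef_pihomog mcoeff0.
by case: eqP => // mE; apply/memN_msupp_eq0/msize_mdeg_ge; rewrite mE.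
Qed.

Lemma msize_sub_pihomog d p :
  (msize p <= d.+1)%N -> (msize (p - pihomog mdeg d p) <= d)%N.
Proof.
move=> pd; apply: msize_le_coef => m le_m; rewrite mcoeffB coef_pihomog.
case: eqP => [_ | /eqP ne]; first by rewrite subrr.
apply/eqP; rewrite subr0 -[_ == _]negbK -mcoeff_msupp.
by apply/negP => /msize_mdeg_lt m_lt; move: (leq_trans m_lt pd) le_m ne; lia.
Qed.

Lemma msize_pihomog_eq0 s d p : (msize p <= s.+1 - d)%N ->
  pihomog mdeg (s - d) p = 0 -> (msize p <= s - d)%N.
Proof.
move=> pd p0; rewrite -[p]subr0 -p0; apply: msize_sub_pihomog.
by apply: leq_trans pd _; lia.
Qed.

Lemma homog_msize p d : p != 0 -> p \is d.-homog for mdeg -> msize p = d.+1.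
Proof.
move=> p0 p_homog; have := dhomog_uniq p0 p_homog (dhomog_msize p_homog) => ->.
by rewrite prednK // lt0n msize_poly_eq0.
Qed.

Lemma pihomog_mul_top p q a b : (msize p <= a.+1)%N -> (msize q <= b.+1)%N ->
  pihomog mdeg (a + b) (p * q) = pihomog mdeg a p * pihomog mdeg b q.
Proof.
move=> pa qb; set pa' := pihomog mdeg a p; set qb' := pihomog mdeg b q.
have -> : p * q = pa' * qb' + (pa' * (q - qb') + (p - pa') * q) by ring.
rewrite pihomogD pihomog_dE; last by apply: dhomogM; apply: pihomogP.
rewrite pihomog_small ?addr0 //; apply: msizeD_bound.
  by apply: leq_trans (msizeM_bound (msize_pihomog a p) (msize_sub_pihomog qb)) _.
by apply: leq_trans (msizeM_bound (msize_sub_pihomog pa) qb) _; rewrite addnS.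
Qed.

End MsizeBounds.

Section Symbol.
Variables (K : fieldType) (n : nat).
Implicit Types F L S : {mpoly K[n]}.

Lemma SymE F : Sym F = pihomog mdeg (msize F).-1 F.
Proof. by []. Qed.

Lemma Sym_neq0 F : F != 0 -> Sym F != 0.
Proof.
move=> F0; apply/eqP => /(congr1 (mcoeff (mlead F))).
rewrite SymE coef_pihomog mcoeff0 -(mlead_deg F0) eqxx => /eqP.
by rewrite mleadc_eq0 (negbTE F0).
Qed.

Lemma Sym_homog_msize F S e :
  Sym F = S -> S != 0 -> S \is e.-homog for mdeg -> (msize F).-1 = e.
Proof.
move=> <- SF0 SF_homog; apply: (dhomog_uniq SF0 _ SF_homog); exact: pihomogP.
Qed.

Lemma Sym_factor_degrees L (S1 S2 : {mpoly K[n]}) d d1 d2 : ord_eq L d ->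
  Sym L = S1 * S2 -> S1 \is d1.-homog for mdeg -> S2 \is d2.-homog for mdeg ->
  [/\ S1 != 0, S2 != 0 & d = (d1 + d2)%N].
Proof.
move=> [L0 msizeL] SymL S1_homog S2_homog.
have := Sym_neq0 L0; rewrite SymL mulf_eq0 negb_or => /andP[S10 S20].
split=> //.
have := Sym_homog_msize SymL _ (dhomogM S1_homog S2_homog); rewrite msizeL.
by apply; rewrite mulf_neq0.
Qed.

End Symbol.

Section Composition.
Variables (K : fieldType) (n : nat) (der : 'I_n -> K -> K).
Implicit Types A B P Q : {mpoly K[n]}.

Lemma msize_coef_der i P : (msize (coef_der der i P) <= msize P)%N.
Proof.
apply: msize_sum_bound => m mP; apply: leq_trans (msizeZ_le _ _) _.
by rewrite msizeX; apply: msize_mdeg_lt.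
Qed.

Lemma msizeXn (i : 'I_n) k : msize ('X_i ^+ k : {mpoly K[n]}) = k.+1.
Proof. by rewrite mpolyXn msizeX mdegMn mdeg1 mul1n. Qed.

Lemma iter_lcompD_bound i k P b : (msize P <= b.+1)%N ->
  (msize (iter k (lcompD der i) P - P * 'X_i ^+ k) <= k + b)%N /\
  (msize (iter k (lcompD der i) P) <= (k + b).+1)%N.
Proof.
move=> Pb; elim: k => [|k [IH1 IH2]] /=; first by rewrite expr0 mulr1 subrr msize0.
set Q := iter k (lcompD der i) P in IH1 IH2 *.
have Xi2 : (msize ('X_i : {mpoly K[n]}) <= 2)%N by rewrite msizeX mdeg1.
split; last first.
  apply: msizeD_bound; last by apply: leq_trans (msize_coef_der _ _) _; rewrite ltnW.
  by apply: leq_trans (msizeM_bound IH2 Xi2) _; rewrite addn2.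
have -> : lcompD der i Q - P * 'X_i ^+ k.+1 =
    (Q - P * 'X_i ^+ k) * 'X_i + coef_der der i Q by rewrite /lcompD exprSr; ring.
apply: msizeD_bound; last by apply: leq_trans (msize_coef_der _ _) _.
by apply: leq_trans (msizeM_bound IH1 Xi2) _; rewrite addn2 addSn.
Qed.

Lemma foldr_lcompD_bound (J : 'X_{1..n}) (l : seq 'I_n) P b :
  (msize P <= b.+1)%N ->
  (msize (foldr (fun i Q => iter (J i) (lcompD der i) Q) P l
     - P * \prod_(i <- l) 'X_i ^+ J i) <= \sum_(i <- l) J i + b)%N /\
  (msize (foldr (fun i Q => iter (J i) (lcompD der i) Q) P l)
     <= (\sum_(i <- l) J i + b).+1)%N.
Proof.
move=> Pb; elim: l => [|i l [IH1 IH2]] /=.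
  by rewrite !big_nil mulr1 subrr msize0.
set Q := foldr _ P l in IH1 IH2 *.
have [iter1 iter2] := iter_lcompD_bound i (J i) IH2.
rewrite !big_cons -!addnA; split=> //.
have -> : iter (J i) (lcompD der i) Q - P * ('X_i ^+ J i * \prod_(j <- l) 'X_j ^+ J j) =
    (iter (J i) (lcompD der i) Q - Q * 'X_i ^+ J i)
    + (Q - P * \prod_(j <- l) 'X_j ^+ J j) * 'X_i ^+ J i by ring.
apply: msizeD_bound => //.
apply: leq_trans (msizeM_bound IH1 (eq_leq (msizeXn i (J i)))) _.
by rewrite addnS /= addnC.
Qed.

Lemma lcompDJ_bound J P b : (msize P <= b.+1)%N ->
  (msize (lcompDJ der J P - 'X_[J] * P) <= mdeg J + b)%N.
Proof.
move=> Pb; have [+ _] := foldr_lcompD_bound J (enum 'I_n) Pb.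
have -> : \prod_(i <- enum 'I_n) ('X_i ^+ J i : {mpoly K[n]}) = 'X_[J].
  by rewrite mpolyXE_id (big_enum _ _ 'I_n); apply: eq_bigl => i; rewrite inE.
have -> : (\sum_(i <- enum 'I_n) J i)%N = mdeg J.
  by rewrite mdegE (big_enum _ _ 'I_n); apply: eq_bigl => i; rewrite inE.
by rewrite mulrC.
Qed.

Lemma dcomp_mul_bound A B a b : (msize A <= a.+1)%N -> (msize B <= b.+1)%N ->
  (msize (dcomp der A B - A * B) <= a + b)%N.
Proof.
move=> Aa Bb.
have -> : A * B = \sum_(J <- msupp A) A@_J *: ('X_[J] * B).
  by rewrite {1}[A]mpolyE mulr_suml; apply: eq_bigr => J _; rewrite scalerAl.
rewrite /dcomp -sumrB; apply: msize_sum_bound => J JA.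
rewrite -scalerBr; apply: leq_trans (msizeZ_le _ _) _.
apply: leq_trans (lcompDJ_bound J Bb) _; rewrite leq_add2r -ltnS.
exact: leq_trans (msize_mdeg_lt JA) Aa.
Qed.

Lemma pihomog_dcomp A B a b : (msize A <= a.+1)%N -> (msize B <= b.+1)%N ->
  pihomog mdeg (a + b) (dcomp der A B) = pihomog mdeg a A * pihomog mdeg b B.
Proof.
move=> Aa Bb; rewrite -(pihomog_mul_top Aa Bb) -[dcomp _ _ _](subrK (A * B)).
by rewrite pihomogD pihomog_small ?add0r // dcomp_mul_bound.
Qed.

Hypothesis der_add : forall i a b, der i (a + b) = der i a + der i b.

Lemma sum_msupp_widen (F : 'X_{1..n} -> K -> {mpoly K[n]}) P k :
  (forall m, F m 0 = 0) -> (msize P <= k)%N ->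
  \sum_(m <- msupp P) F m P@_m = \sum_(m : 'X_{1..n < k}) F m P@_m.
Proof.
move=> F0 Pk; set I : subFinType _ := 'X_{1..n < k}.
rewrite (big_mksub I) ?msupp_uniq //=; last first.
  by move=> x /msize_mdeg_lt /leq_trans; apply.
by rewrite big_rmcond //= => j /memN_msupp_eq0 ->; rewrite F0.
Qed.

Lemma sum_msuppB (F : 'X_{1..n} -> K -> {mpoly K[n]}) P Q :
  (forall m a b, F m (a - b) = F m a - F m b) ->
  \sum_(m <- msupp (P - Q)) F m (P - Q)@_m =
  \sum_(m <- msupp P) F m P@_m - \sum_(m <- msupp Q) F m Q@_m.
Proof.
move=> FB; have F0 m : F m 0 = 0 by rewrite -(subrr 0) FB subrr.
pose k := maxn (msize P) (maxn (msize Q) (msize (P - Q))).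
have [kP kQ kPQ] : [/\ msize P <= k, msize Q <= k & msize (P - Q) <= k]%N.
  by rewrite !leq_max !leqnn !orbT.
rewrite (sum_msupp_widen F0 kPQ) (sum_msupp_widen F0 kP) (sum_msupp_widen F0 kQ).
rewrite -sumrB; by apply: eq_bigr => m _; rewrite mcoeffB FB.
Qed.

Lemma derB i a b : der i (a - b) = der i a - der i b.
Proof. by apply: (addIr (der i b)); rewrite -der_add !subrK. Qed.

Lemma lcompDB i : {morph lcompD der i : P Q / P - Q}.
Proof.
move=> P Q; have cdB : coef_der der i (P - Q) = coef_der der i P - coef_der der i Q.
  apply: (sum_msuppB (F := fun m a => der i a *: 'X_[m])) => m a b.
  by rewrite derB scalerBl.
by rewrite /lcompD cdB; ring.
Qed.

Lemma lcompDJB J : {morph lcompDJ der J : P Q / P - Q}.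
Proof.
move=> P Q; rewrite /lcompDJ; elim: (enum 'I_n) => //= i l ->.
by elim: (J i) => //= k ->; rewrite lcompDB.
Qed.

Lemma dcompBl A B P : dcomp der (A - B) P = dcomp der A P - dcomp der B P.
Proof.
apply: (sum_msuppB (F := fun m a => a *: lcompDJ der m P)) => m a b.
by rewrite scalerBl.
Qed.

Lemma dcompBr A P Q : dcomp der A (P - Q) = dcomp der A P - dcomp der A Q.
Proof. by rewrite /dcomp -sumrB; apply: eq_bigr => J _; rewrite lcompDJB scalerBr. Qed.

(* The subtractions are truncated: when s < ord A' the first hypothesis forces
   B' = B'', and symmetrically. *)
Lemma dcomp_diff_top A' A'' B' B'' s :
  (msize (B' - B'') <= s.+1 - (msize A').-1)%N ->
  (msize (A' - A'') <= s.+1 - (msize B'').-1)%N ->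
  pihomog mdeg s (dcomp der A' B' - dcomp der A'' B'') =
    Sym A' * pihomog mdeg (s - (msize A').-1) (B' - B'')
    + pihomog mdeg (s - (msize B'').-1) (A' - A'') * Sym B''.
Proof.
have split_diff : dcomp der A' B' - dcomp der A'' B'' =
    dcomp der A' (B' - B'') + dcomp der (A' - A'') B''.
  by rewrite dcompBr dcompBl addrA subrK.
have dcomp0r C : dcomp der C 0 = 0 by have := dcompBr C 0 0; rewrite !subrr.
have dcomp0l C : dcomp der 0 C = 0 by rewrite /dcomp msupp0 big_nil.
move=> B_le A_le; rewrite split_diff pihomogD; congr (_ + _).
  have [-> | BB0] := eqVneq (B' - B'') 0; first by rewrite dcomp0r !pihomog0 mulr0.
  have le_s : ((msize A').-1 <= s)%N.
    by move: B_le BB0; rewrite -msize_poly_eq0 -lt0n; lia.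
  rewrite -{1}(subnKC le_s) SymE pihomog_dcomp ?leqSpred //.
  by apply: leq_trans B_le _; lia.
have [-> | AA0] := eqVneq (A' - A'') 0; first by rewrite dcomp0l !pihomog0 mul0r.
have le_s : ((msize B'').-1 <= s)%N.
  by move: A_le AA0; rewrite -msize_poly_eq0 -lt0n; lia.
rewrite -{1}(subnK le_s) SymE pihomog_dcomp ?leqSpred //.
by apply: leq_trans A_le _; lia.
Qed.

End Composition.

Unset Implicit Arguments. Set Strict Implicit.

Theorem mainTheorem2 (K : fieldType) (n : nat) (der : 'I_n -> K -> K)
    (L S1 S2 S0 : {mpoly K[n]}) (d d1 d2 d0 t : nat)
    (F1 F2 F1' F2' F1'' F2'' : {mpoly K[n]}) :
  commuting_derivations der ->
  ord_eq L d ->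
  Sym L = S1 * S2 ->
  S1 \is @ishomog1 n K d1 mdeg ->
  S2 \is @ishomog1 n K d2 mdeg ->
  is_gcd S1 S2 S0 ->
  (msize S0).-1 = d0 ->
  (1 <= t)%N -> t%:Z <= d%:Z - d0%:Z ->
  partial_fact der L F1 F2 S1 S2 t ->
  partial_fact der L F1' F2' S1 S2 t.-1 ->
  extends F1 F2 F1' F2' t d d1 d2 ->
  partial_fact der L F1'' F2'' S1 S2 t.-1 ->
  extends F1 F2 F1'' F2'' t d d1 d2 ->
  ord_lt (F1' - F1'') (t.-1%:Z - (d%:Z - d1%:Z)) /\
  ord_lt (F2' - F2'') (t.-1%:Z - (d%:Z - d2%:Z)).
Proof.
move=> [der_add _ _] ordL SymL S1_homog S2_homog [S0S1 _ gcdS] <- t_gt0 t_le _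
  [SymF1' _ LF'] [E1' E2'] [_ SymF2'' LF''] [E1'' E2''].
have [S10 S20 dE] := Sym_factor_degrees ordL SymL S1_homog S2_homog.
have ordF1' := Sym_homog_msize SymF1' S10 S1_homog.
have ordF2'' := Sym_homog_msize SymF2'' S20 S2_homog.
have [subd1 subd2] : d%:Z - d1%:Z = d2%:Z /\ d%:Z - d2%:Z = d1%:Z by rewrite dE; lia.
set s := t.-1 in LF' LF'' *; have tE : t = s.+1 by rewrite prednK.
move: E1' E1'' E2' E2'' LF' LF''; rewrite subd1 subd2 tE.
move=> /ord_lt_subnE E1' /ord_lt_subnE E1'' /ord_lt_subnE E2' /ord_lt_subnE E2''.
move=> /ord_ltE LF' /ord_ltE LF''.
have G1_le := msize_sub_triangle E1' E1''.
have G2_le := msize_sub_triangle E2' E2''.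
have := dcomp_diff_top der_add
  (A' := F1') (A'' := F1'') (B' := F2') (B'' := F2'') (s := s).
rewrite ordF1' ordF2'' SymF1' SymF2'' pihomog_small ?(msize_sub_triangle LF' LF'') //.
move=> /(_ G2_le G1_le) /esym top.
have deg_lt : (s + (msize S0).-1 < (msize S1).-1 + d2)%N.
  by rewrite (homog_msize S10 S1_homog) /=; move: t_le; rewrite tE dE; lia.
have [g10 g20] := gcd_syzygy_eq0 S10 S20 S0S1 gcdS deg_lt
  (leq_trans (msize_pihomog_le _ _) G1_le) top.
by split; apply/ord_lt_subnE; apply: msize_pihomog_eq0.
Qed.
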